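(* Let $R$ be a $\delta$-ring, $I$ an ideal of $R$ containing $p$, and $A$ a $\delta$-$R$-algebra which is $I$-adically separated with $A/I^nA$ smooth over $R/I^n$ for all $n\ge1$. Let $T_1,\dots,T_d\in A$ be such that $d(T_i\bmod IA)$ form a basis of $\Omega_{(A/IA)/(R/I)}$. Let $\alpha,\beta\in A$ with $\delta(\alpha)=\alpha\beta$ and let $\partial$ be an $\alpha$-derivation of $A$ over $R$. Then $\partial$ is $\delta$-compatible with respect to $\beta$ if and only if each $T_i$ ($1\le i\le d$) is $\delta$-compatible with respect to $\partial$ and $\beta$.
   Context: $p$ a fixed prime; $\delta$-rings: $\delta(0)=\delta(1)=0$, $\delta(x+y)=\delta(x)+\delta(y)-\sum_{i=1}^{p-1}\frac1p\binom pi x^iy^{p-i}$, $\delta(xy)=\delta(x)y^p+x^p\delta(y)+p\delta(x)\delta(y)$. An $\alpha$-derivation of $A$ over $R$ is an $R$-linear $\partial$ with $\partial(1)=0$, $\partial(xy)=\partial(x)y+x\partial(y)+\alpha\partial(x)\partial(y)$. An element $x\in A$ is $\delta$-compatible with respect to $\partial$ and $\beta$ if $\partial(\delta(x))=(\alpha^{p-1}+p\beta)\delta(\partial(x))+\beta\partial(x)^p-\sum_{\nu=1}^{p-1}\frac1p\binom p\nu x^{p-\nu}\alpha^{\nu-1}\partial(x)^\nu$; $\partial$ is $\delta$-compatible with respect to $\beta$ if every $x\in A$ is. *)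

From HB Require Import structures.
From mathcomp Require Import all_boot all_order all_algebra.
From mathcomp Require Import mpoly.

Set Implicit Arguments.
Unset Strict Implicit.
Unset Printing Implicit Defensive.

Import Order.TTheory GRing.Theory.
Local Open Scope ring_scope.

(* the rational number (1/p) binom(p,i) for 0 < i < p, as an element of a ring *)
Definition binp {T : pzRingType} (p i : nat) : T := ('C(p, i) %/ p)%N%:R.

Definition is_delta (p : nat) (T : comPzRingType) (delta : T -> T) : Prop :=
  [/\ delta 0 = 0, delta 1 = 0,
      (forall x y, delta (x + y) =
          delta x + delta y - \sum_(1 <= i < p) binp p i * x ^+ i * y ^+ (p - i))
    & (forall x y, delta (x * y) =
          delta x * y ^+ p + x ^+ p * delta y + p%:R * delta x * delta y)].

Definition is_ideal (R : comNzRingType) (I : R -> Prop) : Prop :=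
  [/\ I 0, (forall x y, I x -> I y -> I (x + y)) & (forall r x, I x -> I (r * x))].

Fixpoint idealPow (R : comNzRingType) (I : R -> Prop) (n : nat) : R -> Prop :=
  match n with
  | 0 => fun _ => True
  | n'.+1 => fun r => exists m (s t : 'I_m -> R),
       [/\ forall k, I (s k), forall k, idealPow I n' (t k)
         & r = \sum_(k < m) s k * t k]
  end.

Definition extIdeal (R : comNzRingType) (A : comAlgType R) (J : R -> Prop) (a : A)
  : Prop :=
  exists m (c : 'I_m -> A) (s : 'I_m -> R),
    (forall k, J (s k)) /\ a = \sum_(k < m) c k * (s k)%:A.

Definition adically_separated (R : comNzRingType) (A : comAlgType R) (I : R -> Prop) :=
  forall a : A, (forall n, extIdeal (idealPow I n) a) -> a = 0.

Definition is_ralg_hom (R : comNzRingType) (A B : comAlgType R) (f : A -> B) : Prop :=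
  [/\ f 1 = 1, (forall x y, f (x * y) = f x * f y)
    & (forall (r : R) x y, f (r *: x + y) = r *: f x + f y)].

(* A / J A is formally smooth over R / J (J an ideal of R): lifting property
   along surjections of R/J-algebras C -> D with square-zero kernel.
   An R/J-algebra is an R-algebra C with J C = 0, and R/J-algebra maps
   A/JA -> D are exactly R-algebra maps A -> D. *)
Definition formally_smooth_mod (R : comNzRingType) (A : comAlgType R) (J : R -> Prop) :=
  forall (C D : comAlgType R) (pi : C -> D) (g : A -> D),
    (forall r, J r -> r%:A = 0 :> C) ->
    is_ralg_hom pi -> (forall d, exists c, pi c = d) ->
    (forall x y, pi x = 0 -> pi y = 0 -> x * y = 0) ->
    is_ralg_hom g ->
    exists h : A -> C, is_ralg_hom h /\ forall a, pi (h a) = g a.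

Definition evalA (R : comNzRingType) (A : comAlgType R) (m : nat)
  (P : {mpoly R[m]}) (a : 'I_m -> A) : A := mmap (fun r : R => r%:A) a P.

(* A / J A is of finite presentation over R / J *)
Definition fin_pres_mod (R : comNzRingType) (A : comAlgType R) (J : R -> Prop) :=
  exists m (a : 'I_m -> A),
    (forall x : A, exists P : {mpoly R[m]}, extIdeal J (x - evalA P a)) /\
    exists k (Q : 'I_k -> {mpoly R[m]}),
      (forall j, extIdeal J (evalA (Q j) a)) /\
      forall P : {mpoly R[m]}, extIdeal J (evalA P a) ->
        exists (c : 'I_k -> {mpoly R[m]}) (E : {mpoly R[m]}),
          (forall mu, J (E@_mu)) /\ P = \sum_(j < k) c j * Q j + E.

Definition smooth_mod (R : comNzRingType) (A : comAlgType R) (J : R -> Prop) :=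
  fin_pres_mod A J /\ formally_smooth_mod A J.

Definition is_Rderivation (R : comNzRingType) (A : comAlgType R) (M : lmodType A)
  (D : A -> M) : Prop :=
  (forall (r : R) x y, D (r *: x + y) = r%:A *: D x + D y) /\
  (forall x y, D (x * y) = x *: D y + y *: D x).

(* d(T_i mod IA) form a basis of Omega_{(A/IA)/(R/I)}, expressed through the
   universal property of Kaehler differentials: for every A/IA-module M
   (= A-module killed by I), every family of values in M is attained by a
   unique (R/I)-derivation A/IA -> M (= R-derivation A -> M). *)
Definition kahler_basis (R : comNzRingType) (A : comAlgType R) (I : R -> Prop)
  (d : nat) (T : 'I_d -> A) : Prop :=
  forall (M : lmodType A), (forall r, I r -> forall m : M, r%:A *: m = 0) ->
  forall v : 'I_d -> M,
    exists D : A -> M, [/\ is_Rderivation D, (forall i, D (T i) = v i)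
      & forall D' : A -> M, is_Rderivation D' -> (forall i, D' (T i) = v i) ->
          forall x, D' x = D x].

Definition is_alpha_derivation (R : comNzRingType) (A : comAlgType R) (alpha : A)
  (D : A -> A) : Prop :=
  [/\ (forall (r : R) x y, D (r *: x + y) = r *: D x + D y), D 1 = 0
    & (forall x y, D (x * y) = D x * y + x * D y + alpha * D x * D y)].

Definition delta_compatible_elt (p : nat) (A : comPzRingType) (delta : A -> A)
  (alpha beta : A) (D : A -> A) (x : A) : Prop :=
  D (delta x) = (alpha ^+ p.-1 + p%:R * beta) * delta (D x) + beta * D x ^+ p
     - \sum_(1 <= nu < p) binp p nu * x ^+ (p - nu) * alpha ^+ nu.-1 * D x ^+ nu.

Definition delta_compatible (p : nat) (A : comPzRingType) (delta : A -> A)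
  (alpha beta : A) (D : A -> A) : Prop :=
  forall x, delta_compatible_elt p delta alpha beta D x.

From HB Require Import structures.
From mathcomp Require Import all_boot all_order all_algebra.
From mathcomp Require Import mpoly.
From mathcomp Require Import ring zify boolp.

(* Put B := A[e] / (e^2 - alpha e).  Because delta(alpha) = alpha beta, the
   delta-structure of A extends to B, and an alpha-derivation D is the same as a
   ring map jet : x |-> x + (D x) e from A to B.  The defect E of delta-compatibility
   measures how jet fails to commute with delta: jet (delta x) - delta (jet x) =
   (E x) e.  The delta-ring identities in B show that E is additive and satisfies
   E (x y) = E x psi(y) + E y psi(x) - p alpha E x E y for a ring endomorphism psi
   of A with psi(I) in I A.  So if E takes values in I^n A, it induces an
   R-derivation A -> I^n A / I^(n+1) A (A acting through psi), which vanishes on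
   the T_i and hence everywhere by the basis property.  By induction E lands in
   every I^n A, so E = 0 by separatedness. *)

Set Implicit Arguments.
Unset Strict Implicit.
Unset Printing Implicit Defensive.

Import GRing.Theory Num.Theory.
Local Open Scope ring_scope.

Section BinomialDefect.
Variable p : nat.
Hypothesis p_prime : prime p.

Definition Cp (K : comPzRingType) (x y : K) : K :=
  \sum_(1 <= i < p) binp p i * x ^+ i * y ^+ (p - i).

Definition delta_add_law (K : comPzRingType) (d : K -> K) (x y : K) :=
  d (x + y) = d x + d y - Cp x y.

Definition delta_mul_law (K : comPzRingType) (d : K -> K) (x y : K) :=
  d (x * y) = d x * y ^+ p + x ^+ p * d y + p%:R * d x * d y.

Lemma binp_mulr_p (K : pzRingType) i :
  (0 < i < p)%N -> binp p i * p%:R = 'C(p, i)%:R :> K.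
Proof. by move=> lt0ip; rewrite /binp -natrM divnK // prime_dvd_bin. Qed.

Lemma mulr_p_Cp (K : comPzRingType) (x y : K) :
  p%:R * Cp x y = (x + y) ^+ p - x ^+ p - y ^+ p.
Proof.
have p_gt0 := prime_gt0 p_prime.
rewrite [x + y]addrC exprDn.
rewrite -(big_mkord xpredT (fun i => y ^+ (p - i) * x ^+ i *+ 'C(p, i))).
rewrite big_ltn // big_nat_recr //= subn0 subnn bin0 binn !expr0 !mulr1 mul1r.
rewrite /Cp mulr_sumr.
have -> : \sum_(1 <= i < p) y ^+ (p - i) * x ^+ i *+ 'C(p, i) =
          \sum_(1 <= i < p) p%:R * (binp p i * x ^+ i * y ^+ (p - i)).
  by apply: eq_big_nat => i lt0ip; rewrite -mulr_natr -binp_mulr_p //; ring.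
ring.
Qed.

Lemma exprD_Cp (K : comPzRingType) (x y : K) :
  (x + y) ^+ p = x ^+ p + y ^+ p + p%:R * Cp x y.
Proof. by rewrite mulr_p_Cp; ring. Qed.

Lemma rmorph_Cp (K K' : comPzRingType) (f : {rmorphism K -> K'}) (x y : K) :
  f (Cp x y) = Cp (f x) (f y).
Proof.
rewrite rmorph_sum; apply: eq_bigr => i _.
by rewrite !rmorphM !rmorphXn rmorph_nat.
Qed.

Lemma CpC (K : comPzRingType) (x y : K) : Cp x y = Cp y x.
Proof.
rewrite /Cp big_nat_rev /=; apply: eq_big_nat => i /andP [i_gt0 i_ltp].
have -> : (1 + p - i.+1 = p - i)%N by lia.
have -> : (p - (p - i) = i)%N by lia.
rewrite /binp (bin_sub (ltnW i_ltp)); ring.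
Qed.

Lemma Cp_mull (K : comPzRingType) (x y z : K) :
  Cp (x * y) (x * z) = x ^+ p * Cp y z.
Proof.
rewrite /Cp mulr_sumr; apply: eq_big_nat => i /andP [_ i_ltp].
rewrite -[in x ^+ p](subnKC (ltnW i_ltp)) exprD !exprMn; ring.
Qed.

(* Multiplication by p is injective on Z[X_0, ..., X_(n-1)], so identities
   between the Cp that follow from [mulr_p_Cp] hold universally. *)
Lemma mpoly_mulr_p_inj n (a b : {mpoly int[n]}) : p%:R * a = p%:R * b -> a = b.
Proof.
apply: mulfI; rewrite -mpolyC_nat mpolyC_eq0 pnatr_eq0.
by rewrite -lt0n prime_gt0.
Qed.

Lemma Cp_cocycle_mulr_p (K : comPzRingType) (x y z : K) :
  p%:R * (Cp x y + Cp (x + y) z) = p%:R * (Cp y z + Cp x (y + z)).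
Proof.
rewrite !mulrDr !mulr_p_Cp [x + (y + z)]addrA.
by move: (_ ^+ p) (_ ^+ p) (_ ^+ p) (_ ^+ p) (_ ^+ p) (_ ^+ p) => a b c d e f; ring.
Qed.

Lemma Cp_cocycle_rmorph (K K' : comPzRingType) (f : {rmorphism K -> K'})
    (x y z : K) x' y' z' :
  f x = x' -> f y = y' -> f z = z' ->
  Cp x y + Cp (x + y) z = Cp y z + Cp x (y + z) ->
  Cp x' y' + Cp (x' + y') z' = Cp y' z' + Cp x' (y' + z').
Proof. by move=> <- <- <- /(congr1 f); rewrite !rmorphD !rmorph_Cp !rmorphD. Qed.

Lemma Cp_cocycle (K : comNzRingType) (x y z : K) :
  Cp x y + Cp (x + y) z = Cp y z + Cp x (y + z).
Proof.
have univ := mpoly_mulr_p_inj (Cp_cocycle_mulr_p ('X_0 : {mpoly int[3]}) 'X_1 'X_2).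
pose h : 'I_3 -> K := fun i => [:: x; y; z]`_i.
by apply: (Cp_cocycle_rmorph (f := mmap intr h) _ _ _ univ); rewrite /= mmapX mmap1U.
Qed.

Lemma Cp_exchange (K : comNzRingType) (w x y z : K) :
  Cp w x + Cp y z + Cp (w + x) (y + z) = Cp w y + Cp x z + Cp (w + y) (x + z).
Proof.
have e1 := Cp_cocycle w x (y + z); have e2 := Cp_cocycle w y (x + z).
have e3 := Cp_cocycle x y z; have e4 := Cp_cocycle y x z.
rewrite addrAC e1 [RHS]addrAC e2 [y + (x + z)]addrCA addrAC [RHS]addrAC.
congr (_ + _).
by rewrite addrC -e3 [RHS]addrC -e4 (CpC y x) (addrC y x).
Qed.

Lemma delta_add_law_exchange (K : comNzRingType) (d : K -> K) (w x y z : K) :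
  delta_add_law d w x -> delta_add_law d y z -> delta_add_law d (w + x) (y + z) ->
  delta_add_law d w y -> delta_add_law d x z -> delta_add_law d (w + y) (x + z).
Proof.
rewrite /delta_add_law => dwx dyz dwxyz dwy dxz.
have -> : w + y + (x + z) = w + x + (y + z) by ring.
rewrite dwxyz dwx dyz dwy dxz.
have := Cp_exchange w x y z.
move: (Cp w x) (Cp y z) (Cp (w + x) (y + z)) (Cp w y) (Cp x z) (Cp (w + y) (x + z)).
move=> a b c e f g abc_efg.
have -> : g = a + b + c - e - f by rewrite abc_efg; ring.
ring.
Qed.

Lemma delta_mul_lawC (K : comPzRingType) (d : K -> K) (x y : K) :
  delta_mul_law d x y -> delta_mul_law d y x.
Proof. by rewrite /delta_mul_law mulrC => ->; ring. Qed.

Lemma delta_mul_lawDr (K : comPzRingType) (d : K -> K) (x y z : K) :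
  (forall u v, delta_add_law d u v) ->
  delta_mul_law d x y -> delta_mul_law d x z -> delta_mul_law d x (y + z).
Proof.
rewrite /delta_mul_law => dD dxy dxz.
by rewrite mulrDr !dD dxy dxz Cp_mull exprD_Cp; ring.
Qed.

Lemma delta_mul_lawDl (K : comPzRingType) (d : K -> K) (x y z : K) :
  (forall u v, delta_add_law d u v) ->
  delta_mul_law d x z -> delta_mul_law d y z -> delta_mul_law d (x + y) z.
Proof.
move=> dD /delta_mul_lawC dxz /delta_mul_lawC dyz.
exact/delta_mul_lawC/delta_mul_lawDr.
Qed.

Section DeltaLaws.
Variables (K : comPzRingType) (d : K -> K).
Hypothesis d_delta : is_delta p d.

Lemma delta0 : d 0 = 0. Proof. by case: d_delta. Qed.
Lemma delta1 : d 1 = 0. Proof. by case: d_delta. Qed.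
Lemma deltaD x y : delta_add_law d x y. Proof. by case: d_delta => _ _ + _; apply. Qed.
Lemma deltaM x y : delta_mul_law d x y. Proof. by case: d_delta => _ _ _; apply. Qed.

End DeltaLaws.

End BinomialDefect.

Section TwistedDualNumbers.
Variables (K : comNzRingType) (al : K).

(* [(a, b)] stands for [a + b e] in [K[e] / (e ^ 2 - al e)]. *)
Definition tdual (a : K) : Type := (K * K)%type.
Local Notation B := (tdual al).
HB.instance Definition _ := GRing.Zmodule.on B.

Lemma tdual_addE (x y : B) : x + y = (x.1 + y.1, x.2 + y.2).
Proof. by []. Qed.

Lemma tdual_subE (x y : B) : x - y = (x.1 - y.1, x.2 - y.2).
Proof. by []. Qed.

Definition tdual_mul (x y : B) : B :=
  (x.1 * y.1, x.2 * y.1 + x.1 * y.2 + al * x.2 * y.2).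

Lemma tdual_mulA : associative tdual_mul.
Proof. by move=> [x1 x2] [y1 y2] [z1 z2]; congr (_, _); rewrite /=; ring. Qed.

Lemma tdual_mulC : commutative tdual_mul.
Proof. by move=> [x1 x2] [y1 y2]; congr (_, _); rewrite /=; ring. Qed.

Lemma tdual_mul1 : left_id ((1, 0) : B) tdual_mul.
Proof. by move=> [x1 x2]; congr (_, _); rewrite /=; ring. Qed.

Lemma tdual_mulDl : left_distributive tdual_mul +%R.
Proof. by move=> [x1 x2] [y1 y2] [z1 z2]; congr (_, _); rewrite /=; ring. Qed.

Lemma tdual_one_neq0 : ((1, 0) : B) != 0.
Proof. by apply/negP => /eqP [] /eqP; rewrite oner_eq0. Qed.

HB.instance Definition _ := GRing.Zmodule_isComNzRing.Build B
  tdual_mulA tdual_mulC tdual_mul1 tdual_mulDl tdual_one_neq0.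

Lemma tdual_mulE (x y : B) :
  x * y = (x.1 * y.1, x.2 * y.1 + x.1 * y.2 + al * x.2 * y.2).
Proof. by []. Qed.

Definition tdual_const (c : K) : B := (c, 0).
Definition tdual_eps (b : K) : B := (0, b).
Definition tdual_eval (x : B) : K := x.1 + al * x.2.

Lemma tdual_const_is_zmod_morphism : zmod_morphism tdual_const.
Proof. by move=> x y; rewrite tdual_subE /= subr0. Qed.
HB.instance Definition _ := GRing.isZmodMorphism.Build K B tdual_const
  tdual_const_is_zmod_morphism.

Lemma tdual_const_is_monoid_morphism : monoid_morphism tdual_const.
Proof. by split=> // x y; congr (_, _); rewrite /=; ring. Qed.
HB.instance Definition _ := GRing.isMonoidMorphism.Build K B tdual_const
  tdual_const_is_monoid_morphism.

Lemma tdual_eps_is_zmod_morphism : zmod_morphism tdual_eps.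
Proof. by move=> x y; rewrite tdual_subE /= subr0. Qed.
HB.instance Definition _ := GRing.isZmodMorphism.Build K B tdual_eps
  tdual_eps_is_zmod_morphism.

Lemma tdual_eval_is_zmod_morphism : zmod_morphism tdual_eval.
Proof. by move=> [x1 x2] [y1 y2]; rewrite /tdual_eval tdual_subE /=; ring. Qed.
HB.instance Definition _ := GRing.isZmodMorphism.Build B K tdual_eval
  tdual_eval_is_zmod_morphism.

Lemma tdual_eval_is_monoid_morphism : monoid_morphism tdual_eval.
Proof.
by split=> [|[x1 x2] [y1 y2]]; rewrite /tdual_eval /= ?mulr0 ?addr0 //; ring.
Qed.
HB.instance Definition _ := GRing.isMonoidMorphism.Build B K tdual_eval
  tdual_eval_is_monoid_morphism.

Lemma tdual_constDeps (x : B) : x = tdual_const x.1 + tdual_eps x.2.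
Proof. by case: x => x1 x2; rewrite tdual_addE /= addr0 add0r. Qed.

Lemma tdual_mul_eps (b : K) (x : B) : tdual_eps b * x = tdual_eps (b * tdual_eval x).
Proof. by rewrite tdual_mulE /tdual_eval; congr (_, _); rewrite /=; ring. Qed.

Lemma tdual_epsX (b : K) n : tdual_eps b ^+ n.+1 = tdual_eps (al ^+ n * b ^+ n.+1).
Proof.
elim: n => [|n IHn]; first by rewrite expr1 expr0 mul1r expr1.
by rewrite exprS IHn tdual_mul_eps /tdual_eval /=; congr (_, _); rewrite !exprS; ring.
Qed.

End TwistedDualNumbers.

Section TwistedDualDelta.
Variables (p : nat) (A : comNzRingType) (dl : A -> A) (al be : A).
Hypotheses (p_prime : prime p) (dl_delta : is_delta p dl) (dl_al : dl al = al * be).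
Local Notation B := (tdual al).
Local Notation const := (tdual_const al).
Local Notation eps := (tdual_eps al).

Definition compat_sum (x u : A) : A :=
  \sum_(1 <= nu < p) binp p nu * x ^+ (p - nu) * al ^+ nu.-1 * u ^+ nu.

Definition compat_rhs (x u : A) : A :=
  (al ^+ p.-1 + p%:R * be) * dl u + be * u ^+ p - compat_sum x u.

Definition tdual_delta (x : B) : B := (dl x.1, compat_rhs x.1 x.2).

Let p_gt0 : (0 < p)%N. Proof. exact: prime_gt0. Qed.

Lemma compat_sum0l u : compat_sum 0 u = 0.
Proof.
rewrite /compat_sum big_nat big1 // => nu /andP [_ nu_ltp].
by rewrite expr0n subn_eq0 leqNgt nu_ltp mulr0 !mul0r.
Qed.

Lemma compat_sum0r x : compat_sum x 0 = 0.
Proof.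
rewrite /compat_sum big_nat big1 // => nu /andP [nu_gt0 _].
by rewrite expr0n eqn0Ngt nu_gt0 mulr0.
Qed.

Lemma compat_rhs0r x : compat_rhs x 0 = 0.
Proof.
by rewrite /compat_rhs compat_sum0r (delta0 dl_delta) expr0n eqn0Ngt p_gt0 /=; ring.
Qed.

Lemma tdual_epsXp b : eps b ^+ p = eps (al ^+ p.-1 * b ^+ p).
Proof. by rewrite -{1 3}(prednK p_gt0) tdual_epsX. Qed.

Lemma Cp_tdual_eps b b' : Cp p (eps b) (eps b') = eps (al ^+ p.-1 * Cp p b b').
Proof.
rewrite /Cp mulr_sumr raddf_sum; apply: eq_big_nat => -[//|i] /andP [_ i_ltp].
have -> : (p - i.+1 = (p - i.+2).+1)%N by lia.
have -> : al ^+ p.-1 = al * al ^+ i * al ^+ (p - i.+2).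
  by rewrite -exprS -exprD; congr (_ ^+ _); lia.
rewrite !tdual_epsX /binp -(rmorph_nat const) !tdual_mulE /=.
by congr (_, _); ring.
Qed.

Lemma Cp_tdual_const_eps c b : Cp p (const c) (eps b) = eps (compat_sum c b).
Proof.
rewrite /Cp /compat_sum big_nat_rev /= raddf_sum.
apply: eq_big_nat => i /andP [i_gt0 i_ltp].
have -> : (1 + p - i.+1 = p - i)%N by lia.
have -> : (p - (p - i) = i)%N by lia.
case: i i_gt0 i_ltp => [//|i] _ i_ltp.
rewrite -rmorphXn tdual_epsX /binp (bin_sub (ltnW i_ltp)) -(rmorph_nat const).
by rewrite !tdual_mulE /=; congr (_, _); ring.
Qed.

Lemma tdual_delta_const c : tdual_delta (const c) = const (dl c).
Proof. by rewrite /tdual_delta /= compat_rhs0r. Qed.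

Lemma tdual_delta_eps b :
  tdual_delta (eps b) = eps ((al ^+ p.-1 + p%:R * be) * dl b + be * b ^+ p).
Proof. by rewrite /tdual_delta /= (delta0 dl_delta) /compat_rhs compat_sum0l subr0. Qed.

Lemma tdual_deltaD_const c c' : delta_add_law p tdual_delta (const c) (const c').
Proof.
rewrite /delta_add_law -rmorphD !tdual_delta_const -(rmorph_Cp p const).
by rewrite -!rmorphD -rmorphB (deltaD dl_delta).
Qed.

Lemma tdual_deltaD_eps b b' : delta_add_law p tdual_delta (eps b) (eps b').
Proof.
rewrite /delta_add_law -raddfD !tdual_delta_eps Cp_tdual_eps -!raddfD -raddfB.
by congr (eps _); rewrite (exprD_Cp p_prime) (deltaD dl_delta); ring.
Qed.

Lemma tdual_deltaD_const_eps c b : delta_add_law p tdual_delta (const c) (eps b).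
Proof.
rewrite /delta_add_law tdual_delta_const tdual_delta_eps Cp_tdual_const_eps.
rewrite /tdual_delta tdual_subE !tdual_addE /= !addr0 !add0r subr0.
by rewrite /compat_rhs; congr (_, _); ring.
Qed.

Lemma tdual_deltaD x y : delta_add_law p tdual_delta x y.
Proof.
rewrite (tdual_constDeps x) (tdual_constDeps y).
apply: (delta_add_law_exchange p_prime).
- exact: tdual_deltaD_const.
- exact: tdual_deltaD_eps.
- by rewrite -!raddfD; apply: tdual_deltaD_const_eps.
- exact: tdual_deltaD_const_eps.
- exact: tdual_deltaD_const_eps.
Qed.

Lemma tdual_deltaM_const c c' : delta_mul_law p tdual_delta (const c) (const c').
Proof.
rewrite /delta_mul_law -rmorphM !tdual_delta_const -!rmorphXn -(rmorph_nat const).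
by rewrite -!rmorphM -!rmorphD (deltaM dl_delta).
Qed.

Lemma tdual_deltaM_const_eps c b : delta_mul_law p tdual_delta (const c) (eps b).
Proof.
rewrite /delta_mul_law -(rmorph_nat const) tdual_delta_const tdual_delta_eps.
rewrite tdual_epsXp -rmorphXn /tdual_delta !tdual_mulE !tdual_addE /=.
rewrite !mulr0 !mul0r !addr0 !add0r (delta0 dl_delta) /compat_rhs compat_sum0l.
by rewrite (deltaM dl_delta) exprMn; congr (_, _); ring.
Qed.

Lemma tdual_deltaM_eps b b' : delta_mul_law p tdual_delta (eps b) (eps b').
Proof.
rewrite /delta_mul_law -(rmorph_nat const) !tdual_delta_eps !tdual_epsXp.
rewrite /tdual_delta !tdual_mulE !tdual_addE /=.
rewrite !mulr0 !mul0r !addr0 !add0r (delta0 dl_delta) /compat_rhs compat_sum0l.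
have al_p : al ^+ p = al * al ^+ p.-1 by rewrite -exprS prednK.
by rewrite !(deltaM dl_delta) dl_al !exprMn al_p; congr (_, _); ring.
Qed.

Lemma tdual_deltaM x y : delta_mul_law p tdual_delta x y.
Proof.
rewrite (tdual_constDeps x) (tdual_constDeps y).
have dD := tdual_deltaD.
apply: delta_mul_lawDl => //; apply: delta_mul_lawDr => //.
- exact: tdual_deltaM_const.
- exact: tdual_deltaM_const_eps.
- exact/delta_mul_lawC/tdual_deltaM_const_eps.
- exact: tdual_deltaM_eps.
Qed.

Lemma is_delta_tdual : is_delta p tdual_delta.
Proof.
split; [| |exact: tdual_deltaD|exact: tdual_deltaM].
- by rewrite /tdual_delta /= (delta0 dl_delta) compat_rhs0r.
- by rewrite /tdual_delta /= (delta1 dl_delta) compat_rhs0r.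
Qed.

End TwistedDualDelta.

Section IdealFacts.
Variables (R : comNzRingType) (J : R -> Prop).
Hypothesis J_ideal : is_ideal J.

Lemma ideal0 : J 0. Proof. by case: J_ideal. Qed.
Lemma idealD x y : J x -> J y -> J (x + y).
Proof. by case: J_ideal => _ + _; apply. Qed.
Lemma idealMl r x : J x -> J (r * x). Proof. by case: J_ideal => _ _; apply. Qed.
Lemma idealN x : J x -> J (- x). Proof. by rewrite -mulN1r; apply: idealMl. Qed.
Lemma idealB x y : J x -> J y -> J (x - y).
Proof. by move=> Jx /idealN; apply: idealD. Qed.

Lemma ideal_sum m (f : 'I_m -> R) : (forall k, J (f k)) -> J (\sum_(k < m) f k).
Proof. by move=> Jf; elim/big_ind: _ => //; [exact: ideal0 | exact: idealD]. Qed.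

End IdealFacts.

Section ConcatFamilies.
Variables (m m' : nat).

Definition catf (T : Type) (f : 'I_m -> T) (g : 'I_m' -> T) (k : 'I_(m + m')) : T :=
  match split k with inl i => f i | inr j => g j end.

Lemma catf_forall (T : Type) (P : T -> Prop) f g :
  (forall i, P (f i)) -> (forall j, P (g j)) -> forall k, P (catf f g k).
Proof. by move=> Pf Pg k; rewrite /catf; case: split. Qed.

Lemma big_catf (V : nmodType) (T1 T2 : Type) (f : 'I_m -> T1) (g : 'I_m' -> T1)
    (f' : 'I_m -> T2) (g' : 'I_m' -> T2) (F : T1 -> T2 -> V) :
  \sum_(k < m + m') F (catf f g k) (catf f' g' k) =
  \sum_(i < m) F (f i) (f' i) + \sum_(j < m') F (g j) (g' j).
Proof.
rewrite big_split_ord /catf; congr (_ + _); apply: eq_bigr => i _.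
  by have -> : split (lshift m' i) = inl i := unsplitK (inl i).
by have -> : split (rshift m i) = inr i := unsplitK (inr i).
Qed.

End ConcatFamilies.

Section IdealPowers.
Variables (R : comNzRingType) (I : R -> Prop).
Hypothesis I_ideal : is_ideal I.

Lemma idealPow_ideal n : is_ideal (idealPow I n).
Proof.
case: n => [|n] //=; split.
- by exists 0%N, (fun=> 0), (fun=> 0); split; [case | case | rewrite big_ord0].
- move=> _ _ [m [s [t [Is It ->]]]] [m' [s' [t' [Is' It' ->]]]].
  exists (m + m')%N, (catf s s'), (catf t t'); split; try exact: catf_forall.
  by rewrite (big_catf s s' t t' *%R).
- move=> r _ [m [s [t [Is It ->]]]]; exists m, (fun k => r * s k), t; split => //.
    by move=> k; apply: idealMl.
  by rewrite mulr_sumr; apply: eq_bigr => k _; rewrite mulrA.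
Qed.

Lemma idealPow_mul n s t : I s -> idealPow I n t -> idealPow I n.+1 (s * t).
Proof. by move=> Is It; exists 1%N, (fun=> s), (fun=> t); rewrite big_ord1. Qed.

End IdealPowers.

Section ExtendedIdeals.
Variables (R : comNzRingType) (A : comAlgType R).

Lemma extIdeal_ideal (J : R -> Prop) : is_ideal (extIdeal (A := A) J).
Proof.
split.
- by exists 0%N, (fun=> 0), (fun=> 0); split; [case | rewrite big_ord0].
- move=> _ _ [m [c [s [Js ->]]]] [m' [c' [s' [Js' ->]]]].
  exists (m + m')%N, (catf c c'), (catf s s'); split; first exact: catf_forall.
  by rewrite (big_catf c c' s s' (fun a b => a * b%:A)).
- move=> a _ [m [c [s [Js ->]]]]; exists m, (fun k => a * c k), s; split => //.
  by rewrite mulr_sumr; apply: eq_bigr => k _; rewrite mulrA.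
Qed.

Lemma extIdeal_scale (J J' : R -> Prop) (s : R) x :
  (forall t, J t -> J' (s * t)) -> extIdeal (A := A) J x -> extIdeal J' (s%:A * x).
Proof.
move=> JJ' [m [c [t [Jt ->]]]]; exists m, c, (fun k => s * t k); split.
  by move=> k; apply: JJ'.
rewrite mulr_sumr; apply: eq_bigr => k _.
by rewrite mulrCA mulr_algl scalerA.
Qed.

Lemma extIdeal_idealPow0 (I : R -> Prop) x : extIdeal (A := A) (idealPow I 0) x.
Proof. by exists 1%N, (fun=> x), (fun=> 1); rewrite big_ord1 scale1r mulr1. Qed.

End ExtendedIdeals.

Section TwistedQuotient.
Variables (A : comNzRingType) (P Q : A -> Prop).

Record ideal_pair : Prop := IdealPair { ideal_P : is_ideal P; ideal_Q : is_ideal Q }.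

Variables (psi : {rmorphism A -> A}) (PQ : ideal_pair).

(* The cosets [m + Q] with [m] in [P] (that is, [P / Q] when [Q] is contained
   in [P]), an [A]-module through [psi].  The type mentions [psi] and [PQ] so
   that its instances, which depend on them, can be found from the type. *)
Definition tquot (_ : {rmorphism A -> A}) (_ : ideal_pair) : Type :=
  {S : A -> Prop | exists2 m, P m & S = fun y => Q (y - m)}.
Local Notation M := (tquot psi PQ).
HB.instance Definition _ := gen_eqMixin M.
HB.instance Definition _ := gen_choiceMixin M.

Let P0 := ideal0 (ideal_P PQ).

Definition qcoset_in (m : A) (Pm : P m) : M :=
  exist _ (fun y => Q (y - m)) (ex_intro2 _ _ m Pm erefl).

Definition qcoset (m : A) : M :=
  if pselect (P m) is left Pm then qcoset_in Pm else qcoset_in P0.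

Definition qrep (S : M) : A := s2val (cid2 (svalP S)).

Lemma qcosetE m (Pm : P m) : qcoset m = qcoset_in Pm.
Proof. by rewrite /qcoset; case: pselect => // Pm'; apply: eq_exist. Qed.

Lemma qrep_in (S : M) : P (qrep S).
Proof. exact: s2valP (cid2 (svalP S)). Qed.

Lemma qrepK (S : M) : qcoset (qrep S) = S.
Proof.
have S_def : sval S = fun y => Q (y - qrep S) := s2valP' (cid2 (svalP S)).
rewrite (qcosetE (qrep_in S)); move: S_def (qrep_in S).
by case: S => S hS /= S_def Prep; apply: eq_exist.
Qed.

Lemma tquot_ind (G : M -> Prop) : (forall m, P m -> G (qcoset m)) -> forall S, G S.
Proof. by move=> Gc S; rewrite -(qrepK S); apply/Gc/qrep_in. Qed.

Lemma qcoset_eqP m m' : P m -> P m' -> qcoset m = qcoset m' <-> Q (m - m').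
Proof.
move=> Pm Pm'; rewrite (qcosetE Pm) (qcosetE Pm'); split.
  move/(congr1 (fun S : M => sval S m)) => /=.
  by rewrite subrr => <-; exact: ideal0 (ideal_Q PQ).
move=> Qmm'; apply: eq_exist; apply: funext => y; apply: propext.
have -> : y - m' = (y - m) + (m - m') by rewrite addrA subrK.
split=> [Qym | Qym'].
  exact: (idealD (ideal_Q PQ)).
have -> : y - m = (y - m + (m - m')) - (m - m') by rewrite addrK.
exact: (idealB (ideal_Q PQ)).
Qed.

Definition tquot_add (S T : M) : M := qcoset (qrep S + qrep T).
Definition tquot_opp (S : M) : M := qcoset (- qrep S).
Definition tquot_scale (a : A) (S : M) : M := qcoset (psi a * qrep S).

Let PD := idealD (ideal_P PQ).
Let PN := idealN (ideal_P PQ).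
Let PM := idealMl (ideal_P PQ).

Lemma qrep_qcoset m : P m -> Q (qrep (qcoset m) - m).
Proof. by move=> Pm; apply/qcoset_eqP; rewrite ?qrepK //; apply: qrep_in. Qed.

Lemma tquot_add_qcoset m m' :
  P m -> P m' -> tquot_add (qcoset m) (qcoset m') = qcoset (m + m').
Proof.
move=> Pm Pm'; apply/qcoset_eqP; [exact/PD/qrep_in/qrep_in | exact: PD |].
have -> : qrep (qcoset m) + qrep (qcoset m') - (m + m') =
          (qrep (qcoset m) - m) + (qrep (qcoset m') - m') by ring.
by apply: (idealD (ideal_Q PQ)); apply: qrep_qcoset.
Qed.

Lemma tquot_opp_qcoset m : P m -> tquot_opp (qcoset m) = qcoset (- m).
Proof.
move=> Pm; apply/qcoset_eqP; [exact/PN/qrep_in | exact: PN |].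
rewrite -opprD; apply: (idealN (ideal_Q PQ)); exact: qrep_qcoset.
Qed.

Lemma tquot_scale_qcoset a m : P m -> tquot_scale a (qcoset m) = qcoset (psi a * m).
Proof.
move=> Pm; apply/qcoset_eqP; [exact/PM/qrep_in | exact: PM |].
rewrite -mulrBr; apply: (idealMl (ideal_Q PQ)); exact: qrep_qcoset.
Qed.

Lemma tquot_addA : associative tquot_add.
Proof.
elim/tquot_ind => a Pa; elim/tquot_ind => b Pb; elim/tquot_ind => c Pc.
by rewrite !tquot_add_qcoset ?addrA //; apply: PD.
Qed.

Lemma tquot_addC : commutative tquot_add.
Proof. by move=> S T; rewrite /tquot_add addrC. Qed.

Lemma tquot_add0 : left_id (qcoset 0) tquot_add.
Proof. by elim/tquot_ind => a Pa; rewrite tquot_add_qcoset ?add0r. Qed.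

Lemma tquot_addN : left_inverse (qcoset 0) tquot_opp tquot_add.
Proof.
elim/tquot_ind => a Pa.
by rewrite tquot_opp_qcoset // tquot_add_qcoset ?addNr //; apply: PN.
Qed.

HB.instance Definition _ := GRing.isZmodule.Build M
  tquot_addA tquot_addC tquot_add0 tquot_addN.

Lemma tquot_scaleA a b S : tquot_scale a (tquot_scale b S) = tquot_scale (a * b) S.
Proof.
move: S; elim/tquot_ind => m Pm.
by rewrite !tquot_scale_qcoset ?rmorphM ?mulrA //; apply: PM.
Qed.

Lemma tquot_scale1 : left_id 1 tquot_scale.
Proof. by elim/tquot_ind => m Pm; rewrite tquot_scale_qcoset // rmorph1 mul1r. Qed.

Lemma tquot_scaleDr : right_distributive tquot_scale +%R.
Proof.
move=> a; elim/tquot_ind => m Pm; elim/tquot_ind => m' Pm'.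
rewrite [_ + _]tquot_add_qcoset // !tquot_scale_qcoset ?mulrDr //; try exact: PD.
by rewrite [RHS]tquot_add_qcoset //; apply: PM.
Qed.

Lemma tquot_scaleDl S : {morph tquot_scale^~ S : a b / a + b}.
Proof.
move=> a b; move: S; elim/tquot_ind => m Pm.
rewrite !tquot_scale_qcoset // rmorphD mulrDl.
by rewrite [RHS]tquot_add_qcoset //; apply: PM.
Qed.

HB.instance Definition _ := GRing.Zmodule_isLmodule.Build A M
  tquot_scaleA tquot_scale1 tquot_scaleDr tquot_scaleDl.

Lemma qcosetD m m' : P m -> P m' -> qcoset m + qcoset m' = qcoset (m + m') :> M.
Proof. exact: tquot_add_qcoset. Qed.

Lemma qcosetZ a m : P m -> a *: (qcoset m : M) = qcoset (psi a * m).
Proof. exact: tquot_scale_qcoset. Qed.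

Lemma qcoset_eq0 m : P m -> qcoset m = 0 :> M <-> Q m.
Proof. by move=> Pm; rewrite -[in Q m](subr0 m); apply: qcoset_eqP. Qed.

End TwistedQuotient.

Lemma kahler_basis_derivation_eq0 (R : comNzRingType) (A : comAlgType R)
    (I : R -> Prop) d (T : 'I_d -> A) (M : lmodType A) (D : A -> M) :
  kahler_basis I T -> (forall r, I r -> forall m : M, r%:A *: m = 0) ->
  is_Rderivation D -> (forall i, D (T i) = 0) -> forall x, D x = 0.
Proof.
move=> TB IM Dder DT x.
have [D0 [_ _ D0_uniq]] := TB M IM (fun=> 0).
have zero_der : is_Rderivation (fun=> 0 : M) by split=> *; rewrite ?scaler0 addr0.
by rewrite (D0_uniq _ Dder DT) -(D0_uniq _ zero_der (fun=> erefl)).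
Qed.

Section DeltaCompatibility.
Variables (p : nat) (R : comNzRingType) (dR : R -> R) (A : comAlgType R).
Variables (dA : A -> A) (al be : A) (D : A -> A).
Hypotheses (p_prime : prime p) (dA_delta : is_delta p dA).
Hypotheses (dA_scalar : forall r : R, dA r%:A = (dR r)%:A) (dA_al : dA al = al * be).
Hypothesis D_der : is_alpha_derivation al D.

Lemma derD x y : D (x + y) = D x + D y.
Proof. by case: D_der => lin _ _; have := lin 1 x y; rewrite !scale1r. Qed.

Lemma der0 : D 0 = 0.
Proof. by apply: (@addrI _ (D 0)); rewrite -derD !addr0. Qed.

Lemma derZ r x : D (r *: x) = r *: D x.
Proof. by case: D_der => lin _ _; have := lin r x 0; rewrite !addr0 der0 addr0. Qed.

Lemma derN x : D (- x) = - D x.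
Proof. by rewrite -scaleN1r derZ scaleN1r. Qed.

Lemma der_scalar r : D r%:A = 0.
Proof. by case: D_der => _ D1 _; rewrite derZ D1 scaler0. Qed.

Definition jet (x : A) : tdual al := (x, D x).

Lemma jet_is_zmod_morphism : zmod_morphism jet.
Proof. by move=> x y; rewrite /jet tdual_subE /= derD derN. Qed.
HB.instance Definition _ := GRing.isZmodMorphism.Build A (tdual al) jet
  jet_is_zmod_morphism.

Lemma jet_is_monoid_morphism : monoid_morphism jet.
Proof. by case: D_der => _ D1 DM; split=> [|x y]; rewrite /jet ?D1 // DM. Qed.
HB.instance Definition _ := GRing.isMonoidMorphism.Build A (tdual al) jet
  jet_is_monoid_morphism.

Definition frob (x : A) : A := x ^+ p + p%:R * dA x.

Lemma frobD x y : frob (x + y) = frob x + frob y.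
Proof. by rewrite /frob (deltaD dA_delta) (exprD_Cp p_prime); ring. Qed.

Lemma frob_is_zmod_morphism : zmod_morphism frob.
Proof. by move=> x y; rewrite -[in frob x](subrK y x) (frobD (x - y)) addrK. Qed.
HB.instance Definition _ := GRing.isZmodMorphism.Build A A frob
  frob_is_zmod_morphism.

Lemma frob_is_monoid_morphism : monoid_morphism frob.
Proof.
split=> [|x y]; rewrite /frob ?(delta1 dA_delta) ?expr1n ?mulr0 ?addr0 //.
by rewrite (deltaM dA_delta) exprMn; ring.
Qed.
HB.instance Definition _ := GRing.isMonoidMorphism.Build A A frob
  frob_is_monoid_morphism.

Definition twist : {rmorphism A -> A} := @tdual_eval _ al \o jet \o frob.

Lemma twist_scalar r : twist r%:A = (r ^+ p + p%:R * dR r)%:A.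
Proof.
have frob_r : frob r%:A = (r ^+ p + p%:R * dR r)%:A.
  by rewrite /frob dA_scalar scalerDl exprZn expr1n -scalerA scaler_nat mulr_natl.
by rewrite /= /tdual_eval /= frob_r der_scalar mulr0 addr0.
Qed.

Definition defect (x : A) : A := D (dA x) - compat_rhs p dA al be x (D x).

Lemma delta_compatible_eltE x : delta_compatible_elt p dA al be D x <-> defect x = 0.
Proof. by rewrite /defect; split=> [-> | /eqP]; rewrite ?subrr // subr_eq0 => /eqP. Qed.

Lemma jet_delta_defect x :
  jet (dA x) - tdual_delta p dA be (jet x) = tdual_eps al (defect x).
Proof. by rewrite tdual_subE /= subrr. Qed.

Let tdual_is_delta := is_delta_tdual p_prime dA_delta dA_al.

Lemma tdual_eps_inj : injective (tdual_eps al).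
Proof. by move=> a b []. Qed.

Lemma defectD x y : defect (x + y) = defect x + defect y.
Proof.
apply: tdual_eps_inj; rewrite [RHS]raddfD /= -!jet_delta_defect !rmorphD.
rewrite (deltaD dA_delta) (deltaD tdual_is_delta).
rewrite !rmorphB !rmorphD (rmorph_Cp p jet) /=.
ring.
Qed.

Lemma defectM x y : defect (x * y) =
  defect x * twist y + defect y * twist x - p%:R * al * defect x * defect y.
Proof.
have jet_dA z : jet (dA z) = tdual_delta p dA be (jet z) + tdual_eps al (defect z).
  by rewrite -jet_delta_defect addrC subrK.
have jet_frob z : jet (frob z) = jet z ^+ p + p%:R * jet (dA z).
  by rewrite rmorphD rmorphM rmorphXn rmorph_nat.
have : tdual_eps al (defect (x * y)) =
    tdual_eps al (defect x) * jet (frob y) + tdual_eps al (defect y) * jet (frob x)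
    - p%:R * (tdual_eps al (defect x) * tdual_eps al (defect y)).
  rewrite -jet_delta_defect !jet_frob rmorphM.
  rewrite (deltaM tdual_is_delta) (deltaM dA_delta).
  by rewrite !rmorphD !rmorphM !rmorphXn rmorph_nat /= !jet_dA; ring.
rewrite !tdual_mul_eps mulr_natl -raddfMn -raddfD -raddfB => /tdual_eps_inj ->.
have twistE z : twist z = tdual_eval (jet (frob z)) by [].
by rewrite !twistE /tdual_eval /=; ring.
Qed.

Lemma defect_scalar r : defect r%:A = 0.
Proof.
by rewrite /defect dA_scalar !der_scalar (compat_rhs0r al be p_prime dA_delta) subrr.
Qed.

Lemma defectZ r x : defect (r *: x) = twist r%:A * defect x.
Proof. by rewrite -[r *: x]mulr_algl defectM defect_scalar; ring. Qed.

Lemma qcoset_defect_derivation (P Q : A -> Prop) (PQ : ideal_pair P Q) :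
  (forall x, P (defect x)) -> (forall z, P z -> Q (p%:R * z)) ->
  is_Rderivation (fun x => qcoset twist PQ (defect x)).
Proof.
move=> P_defect Q_p.
have P_mul a z : P (a * defect z) := idealMl (ideal_P PQ) a (P_defect z).
have qcosetZ_defect a z :
    a *: qcoset twist PQ (defect z) = qcoset twist PQ (twist a * defect z).
  exact: qcosetZ (P_defect z).
split=> [r x y | x y].
  by rewrite defectD defectZ qcosetZ_defect (qcosetD _ _ (P_mul _ _) (P_defect _)).
rewrite !qcosetZ_defect (qcosetD _ _ (P_mul _ _) (P_mul _ _)).
apply/(qcoset_eqP _ _ (P_defect _) (idealD (ideal_P PQ) (P_mul _ _) (P_mul _ _))).
rewrite defectM; set ex := defect x; set ey := defect y.
have -> : ex * twist y + ey * twist x - p%:R * al * ex * ey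
          - (twist x * ey + twist y * ex) = p%:R * - (al * ex * ey) by ring.
exact/Q_p/(idealN (ideal_P PQ))/P_mul.
Qed.

Lemma defect_in_idealPow (I : R -> Prop) d (T : 'I_d -> A) :
  is_ideal I -> I p%:R -> kahler_basis I T -> (forall i, defect (T i) = 0) ->
  forall n x, extIdeal (idealPow I n) (defect x).
Proof.
move=> I_ideal Ip TB defectT; elim=> [|n IHn] x; first exact: extIdeal_idealPow0.
have PQ := IdealPair (extIdeal_ideal A (idealPow I n))
                     (extIdeal_ideal A (idealPow I n.+1)).
have Q_p (z : A) : extIdeal (idealPow I n) z -> extIdeal (idealPow I n.+1) (p%:R * z).
  have -> : p%:R * z = (p%:R : R)%:A * z by rewrite scaler_nat.
  by apply: extIdeal_scale => t; apply: idealPow_mul.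
have I_kills r : I r -> forall m : tquot twist PQ, r%:A *: m = 0.
  move=> Ir; have I_frob : I (r ^+ p + p%:R * dR r).
    apply: (idealD I_ideal); last by rewrite mulrC; apply: (idealMl I_ideal).
    by rewrite -(prednK (prime_gt0 p_prime)) exprS mulrC; apply: (idealMl I_ideal).
  elim/tquot_ind => y Py.
  rewrite qcosetZ // qcoset_eq0 ?twist_scalar; last exact: (idealMl (ideal_P PQ)).
  by apply: extIdeal_scale Py => t; apply: idealPow_mul.
have qcoset_defectT i : qcoset twist PQ (defect (T i)) = 0.
  rewrite defectT; apply/(qcoset_eq0 _ _ (ideal0 (ideal_P PQ))).
  exact: (ideal0 (ideal_Q PQ)).
have qcoset_defect_der := qcoset_defect_derivation PQ IHn Q_p.
have := kahler_basis_derivation_eq0 TB I_kills qcoset_defect_der qcoset_defectT x.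
by move/(qcoset_eq0 _ _ (IHn x)).
Qed.

End DeltaCompatibility.

Unset Implicit Arguments.

Theorem proposition6p12 (p : nat) (hp : prime p)
  (R : comNzRingType) (deltaR : R -> R) (A : comAlgType R) (deltaA : A -> A)
  (I : R -> Prop) (d : nat) (T : 'I_d -> A) (alpha beta : A) (D : A -> A) :
  is_delta p deltaR ->
  is_delta p deltaA ->
  (forall r : R, deltaA (r%:A) = (deltaR r)%:A) ->
  is_ideal I -> I p%:R ->
  adically_separated A I ->
  (forall n, (0 < n)%N -> smooth_mod A (idealPow I n)) ->
  kahler_basis I T ->
  deltaA alpha = alpha * beta ->
  is_alpha_derivation alpha D ->
  (delta_compatible p deltaA alpha beta D <->
   forall i : 'I_d, delta_compatible_elt p deltaA alpha beta D (T i)).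
Proof.
move=> _ dA_delta dA_scalar I_ideal Ip sepA _ TB dA_al D_der.
split=> [compat i | compatT x]; first exact: compat.
have defectT i : defect p deltaA alpha beta D (T i) = 0.
  exact/delta_compatible_eltE/compatT.
apply/delta_compatible_eltE/sepA => n.
exact: (defect_in_idealPow hp dA_delta dA_scalar dA_al D_der I_ideal Ip TB defectT).
Qed.
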